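(* Let $M=2^\lambda$, let $\mathcal{S}$ be the $M$-PSK signal set with labelling $\mu(m)=e^{j(2m+1)\pi/M}$, and let $n\ge1$. Let $X$ be the bit-wise XOR map on $\mathbb{Z}_M^n\times\mathbb{Z}_M^n$, $X(u,v)=(u_1\oplus v_1,\dots,u_n\oplus v_n)$, where $\oplus$ is the bitwise XOR of the $\lambda$-bit binary representations. Then $X$ is a Latin square for the $n\times n$ system, and for every nonzero $\Delta x=[\Delta x_A^T\;\Delta x_B^T]^T\in\Delta\mathcal{S}^{2n}$ such that for each $1\le i\le n$ either $\Delta x_{A,i}=\Delta x_{B,i}$ or $\Delta x_{A,i}=-\Delta x_{B,i}$, the map $X$ removes $[\mathrm{span}(\Delta x)]^{\perp}$.
   Context: $M$-PSK signal set: $\mathcal{S}=\{e^{j(2m+1)\pi/M}: m\in\mathbb{Z}_M\}$, labelled by $\mu(m)=e^{j(2m+1)\pi/M}$; for $u\in\mathbb{Z}_M^n$, $\mu(u)=(\mu(u_1),\dots,\mu(u_n))^T$. $\Delta\mathcal{S}=\{s-s':s,s'\in\mathcal{S}\}$. For $V\subseteq\mathbb{C}^N$, $V^\perp=\{y:y^Tv=0\ \forall v\in V\}$. A Latin square for the $n\times n$ system is a map $L:\mathbb{Z}_M^{n}\times\mathbb{Z}_M^{n}\to\Sigma$ with no symbol repeated in any row or column. For nonzero $w\in\mathbb{C}^{2n}$, $L$ removes $[\mathrm{span}(w)]^\perp$ if $L(u,v)=L(u',v')$ whenever $[\mu(u)^T-\mu(u')^T\;\;\mu(v)^T-\mu(v')^T]^T\in\mathrm{span}(w)\setminus\{0\}$.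 *)

From HB Require Import structures.
From mathcomp Require Import all_boot all_order all_algebra all_field.
Set Implicit Arguments. Unset Strict Implicit. Unset Printing Implicit Defensive.
Import Order.TTheory GRing.Theory Num.Theory.
Local Open Scope ring_scope.

Notation ZM l := 'I_(2 ^ l)%N.
Notation ZMvec n l := {ffun 'I_n -> ZM l}.

(* bitwise XOR of l-bit representations; Nat.lxor a b < 2^l already,
   the reduction mod 2^l is only there to land in 'I_(2^l) and is the identity. *)
Definition xorZ (l : nat) (a b : ZM l) : ZM l :=
  Ordinal (ltn_pmod (Nat.lxor a b) (expn_gt0 2 l)).

Definition Xmap (n l : nat) (u v : ZMvec n l) : ZMvec n l :=
  [ffun i => xorZ (u i) (v i)].

(* PSK labelling mu(m) = e^{j(2m+1)pi/M}; M.-root (-1) = e^{j pi/M} in algC. *)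
Definition mu (l : nat) (m : ZM l) : algC :=
  ((2 ^ l)%N.-root (-1)) ^+ (2 * m + 1)%N.

Definition muvec (n l : nat) (u : ZMvec n l) : 'cV[algC]_n := \col_i mu (u i).

Definition inDeltaS (l : nat) (z : algC) : Prop :=
  exists m m' : ZM l, z = mu m - mu m'.

Definition latin_square (n l : nat) (Sigma : Type) (L : ZMvec n l -> ZMvec n l -> Sigma) : Prop :=
  (forall u v v', L u v = L u v' -> v = v') /\
  (forall v u u', L u v = L u' v -> u = u').

Definition removes_span_perp (n l : nat) (Sigma : Type)
    (L : ZMvec n l -> ZMvec n l -> Sigma) (w : 'cV[algC]_(n + n)) : Prop :=
  forall u u' v v' : ZMvec n l,
    let d := col_mx (muvec u - muvec u') (muvec v - muvec v') in
    (exists c : algC, d = c *: w) -> d != 0 -> L u v = L u' v'.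

From HB Require Import structures.
From mathcomp Require Import all_boot all_order all_algebra all_field.
From mathcomp Require Import ring zify.
From Stdlib Require PeanoNat.
Import Order.TTheory GRing.Theory Num.Theory.
Local Open Scope ring_scope.

(* The Latin-square property is coordinatewise cancellation of XOR.  For the
   removal property, the hypothesis d = c *: [dA; dB] with dA_i = +-dB_i says,
   in each coordinate, that mu u - mu u' = +-(mu v - mu v').  Rearranged, this
   is an equation mu a + mu b = mu c + mu d between sums of two points of the
   unit circle, and such an equation forces either {a, b} = {c, d} or
   mu a = -mu b and mu c = -mu d (lemma [unit_sum]).  The PSK points are
   odd powers of a primitive 2M-th root of unity, so mu is injective and
   mu b = -mu a means that b is a with its top bit flipped, i.e.
   a xor b = 2^(l-1) (lemma [mu_opp]).  In every case a xor b = c xor d. *)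

(* Stdlib's bitwise lemmas on [nat]; importing the module would shadow the
   ssreflect notation for [expn]. *)
Module PN := PeanoNat.Nat.

Lemma expn_pow (a b : nat) : (a ^ b)%N = Nat.pow a b.
Proof. by elim: b => [//|b IH]; rewrite expnS IH. Qed.

Lemma lxor_lt (l a b : nat) :
  (a < 2 ^ l)%N -> (b < 2 ^ l)%N -> (Nat.lxor a b < 2 ^ l)%N.
Proof.
move=> /ssrnat.ltP ha /ssrnat.ltP hb; apply/ssrnat.ltP; rewrite expn_pow in ha hb *.
apply/PN.div_small_iff; first exact: PN.pow_nonzero.
by rewrite -PN.shiftr_div_pow2 PN.shiftr_lxor !PN.shiftr_div_pow2 !PN.div_small.
Qed.

Lemma xorZE (l : nat) (a b : ZM l) : val (xorZ a b) = Nat.lxor a b.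
Proof. by rewrite /= modn_small // lxor_lt. Qed.

Lemma lxor_cancel_l (a b c : nat) : Nat.lxor a b = Nat.lxor a c -> b = c.
Proof.
move=> h; rewrite -(PN.lxor_0_l b) -(PN.lxor_nilpotent a) PN.lxor_assoc h.
by rewrite -PN.lxor_assoc PN.lxor_nilpotent PN.lxor_0_l.
Qed.

(* a ^ d = c ^ b  iff  a ^ b = c ^ d: lets the two sign cases share one proof. *)
Lemma lxor_swap (a b c d : nat) :
  Nat.lxor a d = Nat.lxor c b -> Nat.lxor a b = Nat.lxor c d.
Proof.
move=> /(congr1 (PN.testbit ^~ _)) h; apply: PN.bits_inj => j.
move: (h j); rewrite !PN.lxor_spec.
by case: (PN.testbit a j); case: (PN.testbit b j); case: (PN.testbit c j);
  case: (PN.testbit d j).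
Qed.

(* Adding 2^k to a number below 2^k sets bit k, so only that bit differs. *)
Lemma lxor_add_pow2 (m k : nat) :
  (m < 2 ^ k)%N -> Nat.lxor m (m + 2 ^ k) = (2 ^ k)%N.
Proof.
move=> /ssrnat.ltP; rewrite expn_pow => hm.
have disjoint : PN.land m (Nat.pow 2 k) = 0%N.
  apply: PN.bits_inj => j; rewrite PN.land_spec PN.pow2_bits_eqb PN.bits_0.
  case: (PN.eqb_spec k j) => [<-|_]; last by rewrite andbF.
  by rewrite -(PN.add_0_l k) -PN.div_pow2_bits PN.div_small.
rewrite -plusE (PN.add_nocarry_lxor _ _ disjoint).
by rewrite -PN.lxor_assoc PN.lxor_nilpotent PN.lxor_0_l.
Qed.

(* If the odd exponents 2b+1 and 2a+1 differ by 2^l modulo 2^(l+1), i.e.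
   b = a + 2^(l-1) modulo 2^l, then a and b differ exactly in the top bit. *)
Lemma half_turn_lxor (l a b : nat) : (a < 2 ^ l)%N -> (b < 2 ^ l)%N ->
  (2 * b + 1 = 2 ^ l + (2 * a + 1) %[mod 2 ^ l.+1])%N ->
  Nat.lxor a b = (2 ^ l.-1)%N.
Proof.
case: l => [|k] /=.
  by rewrite expn0 => ha hb h; lia.
rewrite !expnS mulnA; set P := (2 ^ k)%N => ha hb.
rewrite (modn_small (_ : 2 * b + 1 < 2 * 2 * P)%N); last by lia.
have [aP|aP] := ltnP a P.
  rewrite modn_small; last by lia.
  move=> h; have -> : b = (a + P)%N by lia.
  exact: lxor_add_pow2.
have -> : (2 * P + (2 * a + 1) = (2 * (a - P) + 1) + 2 * 2 * P)%N by lia.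
rewrite modnDr modn_small; last by lia.
move=> h; have -> : a = (b + P)%N by lia.
by rewrite PN.lxor_comm lxor_add_pow2 //; lia.
Qed.

(* In characteristic <> 2, a 2^l-th root of -1 is a primitive 2^(l+1)-th root
   of unity: its order divides 2^(l+1) but not 2^l. *)
Lemma prim_root_pow2 (R : nzRingType) (l : nat) (z : R) :
  (-1 : R) != 1 -> z ^+ (2 ^ l) = -1 -> (2 ^ l.+1).-primitive_root z.
Proof.
move=> N1neq1 zM.
have z2M : z ^+ (2 ^ l.+1) = 1 by rewrite expnS mulnC exprM zM expr2 mulN1r opprK.
have M2_gt0 : (0 < 2 ^ l.+1)%N by rewrite expn_gt0.
have [m prim_m m_dvd] := prim_order_exists M2_gt0 z2M.
case/(dvdn_pfactor m l.+1 (isT : prime 2)): m_dvd => j j_le m_eq.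
suff j_eq : j = l.+1 by rewrite -j_eq -m_eq.
apply/eqP; rewrite eqn_leq j_le leqNgt; apply/negP => j_lt.
have : (2 ^ j %| 2 ^ l)%N by rewrite dvdn_exp2l // -ltnS.
by rewrite -m_eq (prim_order_dvd prim_m) zM (negPf N1neq1).
Qed.

Lemma unit_conj (C : numClosedFieldType) (x : C) : `|x| = 1 -> x^* = x^-1.
Proof. by move=> hx; rewrite invC_norm hx expr1n invr1 mul1r. Qed.

(* If s = a + e <> 0 then s^* = s / (a e), so a e = b c and a is a root of
   (X - b)(X - c). *)
Lemma unit_sum {C : numClosedFieldType} {a b c e : C} :
  `|a| = 1 -> `|b| = 1 -> `|c| = 1 -> `|e| = 1 -> a + e = b + c ->
  [\/ a = b /\ e = c, a = c /\ e = b | a = - e /\ b = - c].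
Proof.
have unit_neq0 (x : C) : `|x| = 1 -> x != 0 by move=> hx; rewrite -normr_eq0 hx oner_eq0.
have conj_sum (x y : C) : `|x| = 1 -> `|y| = 1 -> (x + y)^* * (x * y) = x + y.
  move=> hx hy; rewrite rmorphD /= !unit_conj //.
  by field; rewrite unit_neq0 ?unit_neq0.
move=> ha hb hc he hs.
have [s0|snz] := eqVneq (a + e) 0.
  by apply: Or33; split; apply/eqP; rewrite -addr_eq0 ?s0 // -hs s0.
have prod_eq : a * e = b * c.
  apply: (mulfI (_ : (a + e)^* != 0)); first by rewrite conjC_eq0.
  by rewrite conj_sum // hs conj_sum.
have : (a - b) * (a - c) = 0.
  have -> : (a - b) * (a - c) = a * a - a * (b + c) + b * c by ring.
  by rewrite -hs -prod_eq; ring.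
move/eqP; rewrite mulf_eq0 !subr_eq0 => /orP[/eqP ab|/eqP ac].
  by apply: Or31; split=> //; apply: (addrI a); rewrite hs ab.
by apply: Or32; split=> //; apply: (addrI a); rewrite hs ac addrC.
Qed.

Section PSKLabelling.
Variable l : nat.

Let r : algC := (2 ^ l)%N.-root (-1).

Lemma r_half_turn : r ^+ (2 ^ l) = -1.
Proof. by rewrite rootCK // expn_gt0. Qed.

Lemma r_prim : (2 ^ l.+1).-primitive_root r.
Proof.
apply: prim_root_pow2 r_half_turn.
by rewrite lt_eqF // (lt_trans (ltrN10 _) ltr01).
Qed.

Lemma norm_mu (a : ZM l) : `|mu a| = 1.
Proof. by rewrite /mu normrX norm_rootC normrN1 rootC1 ?expn_gt0 // expr1n. Qed.

Lemma mu_inj : injective (@mu l).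
Proof.
move=> a b /eqP; rewrite (eq_prim_root_expr r_prim) expnS => /eqP h.
have ha := ltn_ord a; have hb := ltn_ord b.
by apply: ord_inj; rewrite !modn_small in h; lia.
Qed.

Lemma mu_opp (a b : ZM l) : mu b = - mu a -> Nat.lxor a b = (2 ^ l.-1)%N.
Proof.
rewrite -mulN1r -r_half_turn -exprD => /eqP.
rewrite (eq_prim_root_expr r_prim) => /eqP.
exact: half_turn_lxor.
Qed.

Lemma mu_sum_lxor (a b c d : ZM l) :
  mu a + mu b = mu c + mu d -> Nat.lxor a b = Nat.lxor c d.
Proof.
move=> /(unit_sum (norm_mu a) (norm_mu c) (norm_mu d) (norm_mu b)).
case=> [[/mu_inj -> /mu_inj ->] | [/mu_inj -> /mu_inj ->] | [ab cd]] //.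
  exact: PN.lxor_comm.
by rewrite -(PN.lxor_comm b) -(PN.lxor_comm d) (mu_opp _ _ ab) (mu_opp _ _ cd).
Qed.

End PSKLabelling.

Lemma lxor_of_diff_pm (l : nat) (u u' v v' : ZM l) :
  mu u - mu u' = mu v - mu v' \/ mu u - mu u' = - (mu v - mu v') ->
  Nat.lxor u v = Nat.lxor u' v'.
Proof.
case=> h; [apply: lxor_swap |]; apply: mu_sum_lxor;
  by rewrite -[mu u](subrK (mu u')) h; ring.
Qed.

Lemma Xmap_latin (n l : nat) : latin_square (@Xmap n l).
Proof.
split=> [u v v' | v u u'] /ffunP h; apply/ffunP => i; apply: val_inj;
  move: (congr1 val (h i)); rewrite !ffunE !xorZE.
  exact: lxor_cancel_l.
by rewrite !(PN.lxor_comm _ (v i)); apply: lxor_cancel_l.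
Qed.

(* Second half, without the (unneeded) hypotheses that dA, dB have entries
   in Delta S and that [dA; dB] is nonzero. *)
Lemma Xmap_removes_signed_span (n l : nat) (dA dB : 'cV[algC]_n) :
  (forall i, dA i 0 = dB i 0 \/ dA i 0 = - dB i 0) ->
  removes_span_perp (@Xmap n l) (col_mx dA dB).
Proof.
move=> dA_pm_dB u u' v v' /= [c]; rewrite scale_col_mx.
case/eq_col_mx=> /matrixP/(_ _ 0) dU /matrixP/(_ _ 0) dV _.
apply/ffunP => i; apply: val_inj; rewrite !ffunE !xorZE.
apply: lxor_of_diff_pm; move: (dU i) (dV i); rewrite !mxE => -> ->.
by case: (dA_pm_dB i) => ->; [left | right; rewrite mulrN].
Qed.

Theorem lemma5 (l n : nat) (hn : (0 < n)%N) :
  latin_square (@Xmap n l) /\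
  (forall dA dB : 'cV[algC]_n,
     (forall i, inDeltaS l (dA i 0)) ->
     (forall i, inDeltaS l (dB i 0)) ->
     col_mx dA dB != 0 ->
     (forall i, dA i 0 = dB i 0 \/ dA i 0 = - dB i 0) ->
     removes_span_perp (@Xmap n l) (col_mx dA dB)).
Proof.
split; first exact: Xmap_latin.
by move=> dA dB _ _ _; apply: Xmap_removes_signed_span.
Qed.
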